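(* For every integer $g\ge 3$, the graph $W'_g$ does not belong to 2-CBU.
   Context: For $g\ge 3$, the double wheel $W^2_g$ is obtained from a cycle $C_g$ of length $g$ by adding two non-adjacent new vertices, each adjacent to every vertex of $C_g$; an edge not contained in $C_g$ is called a ray. $W'_g$ is obtained from $W^2_g$ by subdividing every ray $\lfloor g/2\rfloor$ times (replacing it by a path with $\lfloor g/2\rfloor$ internal vertices); it is planar of girth $g$. Let $e_1,e_2$ be the standard basis of $\mathbb{R}^2$. A graph belongs to 2-CBU if one can assign to each vertex an axis-parallel rectangle (product of two closed intervals of positive length) in $\mathbb{R}^2$ such that the rectangles have pairwise disjoint interiors, two distinct vertices are adjacent iff their rectangles intersect, and any two intersecting rectangles intersect in a segment of positive length orthogonal to $e_1$. *)

From Stdlib Require Import Reals Arith.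
Open Scope R_scope.

Record rect := Rect { xl : R; xr : R; yl : R; yr : R }.

Definition proper_rect (r : rect) : Prop := xl r < xr r /\ yl r < yr r.

Definition in_rect (r : rect) (p : R * R) : Prop :=
  xl r <= fst p <= xr r /\ yl r <= snd p <= yr r.

Definition in_interior (r : rect) (p : R * R) : Prop :=
  xl r < fst p < xr r /\ yl r < snd p < yr r.

Definition meet_in_vertical_segment (r1 r2 : rect) : Prop :=
  exists x0 a b : R, a < b /\
    forall p : R * R, (in_rect r1 p /\ in_rect r2 p) <->
                      (fst p = x0 /\ a <= snd p <= b).

Definition in_2CBU {V : Type} (P : V -> Prop) (adj : V -> V -> Prop) : Prop :=
  exists f : V -> rect,
    (forall v, P v -> proper_rect (f v)) /\
    (forall u v, P u -> P v -> u <> v ->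
       ~ (exists p, in_interior (f u) p /\ in_interior (f v) p)) /\
    (forall u v, P u -> P v -> u <> v ->
       (adj u v <-> exists p, in_rect (f u) p /\ in_rect (f v) p)) /\
    (forall u v, P u -> P v -> u <> v ->
       (exists p, in_rect (f u) p /\ in_rect (f v) p) ->
       meet_in_vertical_segment (f u) (f v)).

(* Vertices: cycle vertices Cyc i (i < g), the two hubs Hub h (h : bool),
   and the subdivision vertices Sub h i k (i < g, k < floor(g/2)) which are
   the internal vertices of the subdivided ray from Hub h to Cyc i, in order
   Hub h - Sub h i 0 - Sub h i 1 - ... - Sub h i (m-1) - Cyc i. *)
Inductive Wvert : Type :=
| Cyc : nat -> Wvert
| Hub : bool -> Wvert
| Sub : bool -> nat -> nat -> Wvert.

Definition Wvalid (g : nat) (v : Wvert) : Prop :=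
  match v with
  | Cyc i => (i < g)%nat
  | Hub _ => True
  | Sub _ i k => (i < g)%nat /\ (k < g / 2)%nat
  end.

Definition Wedge0 (g : nat) (u v : Wvert) : Prop :=
  match u, v with
  | Cyc i, Cyc j => j = ((i + 1) mod g)%nat
  | Hub h, Sub h' _ k => h' = h /\ k = 0%nat
  | Sub h i k, Sub h' i' k' => h' = h /\ i' = i /\ k' = (k + 1)%nat
  | Sub _ i k, Cyc j => j = i /\ k = (g / 2 - 1)%nat
  | _, _ => False
  end.

Definition Wadj (g : nat) (u v : Wvert) : Prop := Wedge0 g u v \/ Wedge0 g v u.

From Stdlib Require Import Reals Arith Lra Lia ZArith Bool Classical.
Open Scope R_scope.

(* Contacts are vertical segments, so adjacent vertices are rectangles sharing a vertical side
   and no three rectangles touch pairwise.  Let c be the cycle vertex whose rectangle has the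
   highest bottom.  Its two cycle neighbours touch it on opposite sides and lie lower, and the
   last vertex of each hub ray, which also touches c, lies above the cycle neighbour on its side.
   In each arrangement there are a hub h and a cycle neighbour d of c, on opposite sides of c,
   such that the closed walk  hub h, ray to c, d, ray back to hub h  separates the region just
   above c, reachable from the ray end of the other hub, from the region just below c, reachable
   from the remaining cycle neighbour e.  Yet the rays of the other hub join these two vertices
   by a path of rectangles avoiding the walk.  Separation is detected by the parity of the number
   of crossings of the walk by an upward vertical ray. *)

Record cbu_rep {V : Type} (P : V -> Prop) (adj : V -> V -> Prop) (f : V -> rect) : Prop := {
  rep_proper : forall v, P v -> proper_rect (f v);
  rep_interiors : forall u v, P u -> P v -> u <> v ->
    ~ (exists p, in_interior (f u) p /\ in_interior (f v) p);
  rep_adj : forall u v, P u -> P v -> u <> v ->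
    (adj u v <-> exists p, in_rect (f u) p /\ in_rect (f v) p);
  rep_vertical : forall u v, P u -> P v -> u <> v ->
    (exists p, in_rect (f u) p /\ in_rect (f v) p) -> meet_in_vertical_segment (f u) (f v) }.

Definition left_of (r s : rect) : Prop := xr r = xl s.

Definition touching (r s : rect) : Prop :=
  (left_of r s \/ left_of s r) /\ yl r < yr s /\ yl s < yr r.

Lemma vertical_meet_touching r s :
  proper_rect r -> proper_rect s -> meet_in_vertical_segment r s -> touching r s.
Proof.
  intros [Hrx Hry] [Hsx Hsy] (x0 & a & b & Hab & Hmeet).
  assert (Ha : in_rect r (x0, a) /\ in_rect s (x0, a)) by (apply Hmeet; simpl; lra).
  assert (Hb : in_rect r (x0, b) /\ in_rect s (x0, b)) by (apply Hmeet; simpl; lra).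
  unfold in_rect in Ha, Hb; simpl in Ha, Hb.
  pose proof (Rmax_l (xl r) (xl s)); pose proof (Rmax_r (xl r) (xl s)).
  pose proof (Rmin_l (xr r) (xr s)); pose proof (Rmin_r (xr r) (xr s)).
  set (lo := Rmax (xl r) (xl s)) in *; set (hi := Rmin (xr r) (xr s)) in *.
  assert (Hlo : lo <= x0) by (apply Rmax_lub; lra).
  assert (Hhi : x0 <= hi) by (apply Rmin_glb; lra).
  assert (Hcol : forall x, lo <= x <= hi -> x = x0).
  { intros x Hx.
    apply (proj1 (Hmeet (x, a))); unfold in_rect; simpl; lra. }
  assert (Hdeg : lo = hi) by (rewrite (Hcol lo), (Hcol hi); lra).
  split; [|lra].
  unfold left_of, lo, hi, Rmax, Rmin in *.
  destruct (Rle_dec (xl r) (xl s)), (Rle_dec (xr r) (xr s));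
    first [left; lra | right; lra].
Qed.

Lemma no_touching_triangle r s t : proper_rect r -> proper_rect s -> proper_rect t ->
  touching r s -> touching s t -> touching r t -> False.
Proof.
  unfold proper_rect, touching, left_of.
  intros [] [] [] [[|] _] [[|] _] [[|] _]; lra.
Qed.

Lemma interiors_meet r s p : proper_rect s -> in_interior r p -> in_rect s p ->
  exists q, in_interior r q /\ in_interior s q.
Proof.
  intros [Hsx Hsy] [[? ?] [? ?]] [[? ?] [? ?]].
  pose proof (Rmax_l (xl r) (xl s)); pose proof (Rmax_r (xl r) (xl s)).
  pose proof (Rmin_l (xr r) (xr s)); pose proof (Rmin_r (xr r) (xr s)).
  pose proof (Rmax_l (yl r) (yl s)); pose proof (Rmax_r (yl r) (yl s)).
  pose proof (Rmin_l (yr r) (yr s)); pose proof (Rmin_r (yr r) (yr s)).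
  set (lx := Rmax (xl r) (xl s)) in *; set (hx := Rmin (xr r) (xr s)) in *.
  set (ly := Rmax (yl r) (yl s)) in *; set (hy := Rmin (yr r) (yr s)) in *.
  assert (lx < hx) by (apply Rmax_lub_lt; apply Rmin_glb_lt; lra).
  assert (ly < hy) by (apply Rmax_lub_lt; apply Rmin_glb_lt; lra).
  exists ((lx + hx) / 2, (ly + hy) / 2).
  unfold in_interior; simpl; repeat split; lra.
Qed.

Lemma touching_meets_on_side r s p : touching r s -> in_rect r p -> in_rect s p ->
  fst p = xl s \/ fst p = xr s.
Proof. unfold touching, left_of, in_rect. intros [[H|H] _] [[? ?] _] [[? ?] _]; lra. Qed.

Lemma overlap_point a1 a2 b1 b2 : a1 < a2 -> b1 < b2 -> a1 < b2 -> b1 < a2 ->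
  exists y, a1 < y < a2 /\ b1 < y < b2.
Proof.
  intros. exists ((Rmax a1 b1 + Rmin a2 b2) / 2).
  unfold Rmax, Rmin; destruct (Rle_dec a1 b1), (Rle_dec a2 b2); lra.
Qed.

Lemma exists_argmax (F : nat -> R) n : (0 < n)%nat ->
  exists i0, (i0 < n)%nat /\ forall i, (i < n)%nat -> F i <= F i0.
Proof.
  induction n as [|n IH]; intros Hn; [lia|].
  destruct (Nat.eq_dec n 0) as [->|Hn0].
  { exists O. split; [lia|]. intros i Hi. replace i with O by lia. lra. }
  destruct IH as (i1 & Hi1 & Hmax); [lia|].
  destruct (Rle_dec (F n) (F i1)).
  - exists i1. split; [lia|]. intros i Hi.
    destruct (Nat.eq_dec i n) as [->|]; [auto|apply Hmax; lia].
  - exists n. split; [lia|]. intros i Hi.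
    destruct (Nat.eq_dec i n) as [->|]; [lra|]. pose proof (Hmax i ltac:(lia)). lra.
Qed.

Definition in_box (a1 a2 b1 b2 : R) (p : R * R) : Prop :=
  a1 <= fst p <= a2 /\ b1 <= snd p <= b2.

Lemma box_margin r a1 a2 b1 b2 : proper_rect r -> a1 <= a2 -> b1 <= b2 ->
  (forall p, in_box a1 a2 b1 b2 p -> ~ in_rect r p) ->
  exists e, 0 < e /\ forall p, in_box (a1 - e) (a2 + e) (b1 - e) (b2 + e) p -> ~ in_rect r p.
Proof.
  intros [Hx Hy] Ha Hb Hdisj. unfold in_box, in_rect in *.
  destruct (Rlt_dec (xr r) a1).
  { exists ((a1 - xr r) / 2); split; [lra|]. intros p Hp Hr; lra. }
  destruct (Rlt_dec a2 (xl r)).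
  { exists ((xl r - a2) / 2); split; [lra|]. intros p Hp Hr; lra. }
  destruct (Rlt_dec (yr r) b1).
  { exists ((b1 - yr r) / 2); split; [lra|]. intros p Hp Hr; lra. }
  destruct (Rlt_dec b2 (yl r)).
  { exists ((yl r - b2) / 2); split; [lra|]. intros p Hp Hr; lra. }
  exfalso. apply (Hdisj (Rmax a1 (xl r), Rmax b1 (yl r))); simpl;
    unfold Rmax; destruct (Rle_dec a1 (xl r)), (Rle_dec b1 (yl r)); lra.
Qed.

Lemma box_margin_finite (n : nat) (r : nat -> rect) (D : nat -> Prop) a1 a2 b1 b2 :
  a1 <= a2 -> b1 <= b2 ->
  (forall j, (j < n)%nat -> D j ->
     proper_rect (r j) /\ forall p, in_box a1 a2 b1 b2 p -> ~ in_rect (r j) p) ->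
  exists e, 0 < e /\ forall j, (j < n)%nat -> D j ->
    forall p, in_box (a1 - e) (a2 + e) (b1 - e) (b2 + e) p -> ~ in_rect (r j) p.
Proof.
  intros Ha Hb. induction n as [|n IH]; intros Hdisj.
  { exists 1; split; [lra|]. intros; lia. }
  destruct IH as (e1 & He1 & Hm1); [intros j Hj; apply Hdisj; lia|].
  destruct (classic (D n)) as [Dn|NDn].
  - destruct (Hdisj n (Nat.lt_succ_diag_r n) Dn) as [Hr Hn].
    destruct (box_margin (r n) a1 a2 b1 b2 Hr Ha Hb Hn) as (e2 & He2 & Hm2).
    exists (Rmin e1 e2); split; [apply Rmin_glb_lt; auto|].
    pose proof (Rmin_l e1 e2); pose proof (Rmin_r e1 e2).
    intros j Hj Dj p Hp. destruct (Nat.eq_dec j n) as [->|Hjn].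
    + apply Hm2. unfold in_box in *; lra.
    + apply Hm1; [lia|auto|]. unfold in_box in *; lra.
  - exists e1; split; auto.
    intros j Hj Dj. destruct (Nat.eq_dec j n) as [->|Hjn]; [contradiction|].
    apply Hm1; auto; lia.
Qed.

Definition between (a b t : R) : Prop := a <= t <= b \/ b <= t <= a.

Lemma between_min_max a b t : Rmin a b <= t <= Rmax a b -> between a b t.
Proof. unfold between, Rmin, Rmax. destruct (Rle_dec a b); lra. Qed.

Definition on_L (sx sy my ex : R) (p : R * R) : Prop :=
  (fst p = sx /\ between sy my (snd p)) \/ (snd p = my /\ between sx ex (fst p)).

Lemma L_margin_finite (n : nat) (r : nat -> rect) (D : nat -> Prop) a ys yt x0 :
  (forall j, (j < n)%nat -> D j ->
     proper_rect (r j) /\ forall p, on_L a ys yt x0 p -> ~ in_rect (r j) p) ->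
  exists e, 0 < e /\ forall sx my, a - e <= sx <= a + e -> yt - e <= my <= yt + e ->
    forall j, (j < n)%nat -> D j -> forall p, on_L sx ys my x0 p -> ~ in_rect (r j) p.
Proof.
  intros Hdisj.
  pose proof (Rmin_l ys yt); pose proof (Rmin_r ys yt).
  pose proof (Rmax_l ys yt); pose proof (Rmax_r ys yt).
  pose proof (Rmin_l a x0); pose proof (Rmin_r a x0).
  pose proof (Rmax_l a x0); pose proof (Rmax_r a x0).
  destruct (box_margin_finite n r D a a (Rmin ys yt) (Rmax ys yt)) as (e1 & He1 & Hm1);
    [lra|lra|..].
  { intros j Hj Dj. split; [apply Hdisj; auto|]. intros p [Hpx Hpy].
    apply Hdisj; auto. left. split; [lra|]. apply between_min_max; auto. }
  destruct (box_margin_finite n r D (Rmin a x0) (Rmax a x0) yt yt) as (e2 & He2 & Hm2);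
    [lra|lra|..].
  { intros j Hj Dj. split; [apply Hdisj; auto|]. intros p [Hpx Hpy].
    apply Hdisj; auto. right. split; [lra|]. apply between_min_max; auto. }
  exists (Rmin e1 e2); split; [apply Rmin_glb_lt; auto|].
  pose proof (Rmin_l e1 e2); pose proof (Rmin_r e1 e2).
  intros sx my Hsx Hmy j Hj Dj p [[Hp1 Hp2] | [Hp1 Hp2]].
  - apply Hm1; auto. unfold in_box, between in *; lra.
  - apply Hm2; auto. unfold in_box, between in *; lra.
Qed.

Lemma on_L_in_rect r sx sy my ex p : xl r <= sx <= xr r -> yl r <= sy <= yr r ->
  yl r <= my <= yr r -> xl r <= ex <= xr r -> on_L sx sy my ex p -> in_rect r p.
Proof. unfold on_L, between, in_rect. intros ? ? ? ? [[-> ?]|[-> ?]]; lra. Qed.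

Section Representation.
Context {V : Type} {P : V -> Prop} {adj : V -> V -> Prop} {f : V -> rect}.
Hypothesis rep : cbu_rep P adj f.

Lemma rep_touching u v : P u -> P v -> u <> v -> adj u v -> touching (f u) (f v).
Proof.
  intros Hu Hv Huv Ha.
  apply vertical_meet_touching; try apply (rep_proper _ _ _ rep); auto.
  apply (rep_vertical _ _ _ rep); auto. apply (rep_adj _ _ _ rep); auto.
Qed.

Lemma rep_common_point_adj u v p : P u -> P v -> u <> v ->
  in_rect (f u) p -> in_rect (f v) p -> adj u v.
Proof. intros Hu Hv Huv Hpu Hpv. apply (rep_adj _ _ _ rep); eauto. Qed.

Lemma rep_no_triangle u v w : P u -> P v -> P w -> u <> v -> v <> w -> u <> w ->
  adj u v -> adj v w -> adj u w -> False.
Proof.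
  intros Hu Hv Hw Huv Hvw Huw Auv Avw Auw.
  apply (no_touching_triangle (f u) (f v) (f w)); try apply (rep_proper _ _ _ rep);
    auto using rep_touching.
Qed.

Lemma rep_no_triple_point u v w p : P u -> P v -> P w -> u <> v -> v <> w -> u <> w ->
  in_rect (f u) p -> in_rect (f v) p -> in_rect (f w) p -> False.
Proof.
  intros Hu Hv Hw Huv Hvw Huw Hpu Hpv Hpw.
  apply (rep_no_triangle u v w); eauto using rep_common_point_adj.
Qed.

Lemma rep_interior_excludes u v p : P u -> P v -> u <> v ->
  in_interior (f u) p -> ~ in_rect (f v) p.
Proof.
  intros Hu Hv Huv Hpu Hpv.
  apply (rep_interiors _ _ _ rep u v Hu Hv Huv).
  apply (interiors_meet _ _ p); auto. apply (rep_proper _ _ _ rep); auto.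
Qed.

Lemma rep_same_side_separated u v c : P u -> P v -> P c -> u <> v -> u <> c -> v <> c ->
  adj u c -> adj v c ->
  (left_of (f c) (f u) /\ left_of (f c) (f v)) \/ (left_of (f u) (f c) /\ left_of (f v) (f c)) ->
  yr (f u) < yl (f v) \/ yr (f v) < yl (f u).
Proof.
  intros Hu Hv Hc Huv Huc Hvc Auc Avc Hside.
  destruct (Rlt_dec (yr (f u)) (yl (f v))) as [|Hvu]; auto.
  destruct (Rlt_dec (yr (f v)) (yl (f u))) as [|Huv']; auto.
  exfalso.
  destruct (rep_proper _ _ _ rep u Hu), (rep_proper _ _ _ rep v Hv).
  pose proof (Rmax_l (yl (f u)) (yl (f v))); pose proof (Rmax_r (yl (f u)) (yl (f v))).
  assert (Rmax (yl (f u)) (yl (f v)) <= yr (f u) /\ Rmax (yl (f u)) (yl (f v)) <= yr (f v))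
    by (split; apply Rmax_lub; lra).
  set (y := Rmax (yl (f u)) (yl (f v))) in *.
  apply (rep_no_triangle u v c); auto.
  unfold left_of in Hside.
  destruct Hside as [[Hu' Hv'] | [Hu' Hv']].
  - apply (rep_common_point_adj u v (xl (f u), y)); auto;
      unfold in_rect; simpl; repeat split; lra.
  - apply (rep_common_point_adj u v (xr (f u), y)); auto;
      unfold in_rect; simpl; repeat split; lra.
Qed.

Lemma rep_same_side_above u v c : P u -> P v -> P c -> u <> v -> u <> c -> v <> c ->
  adj u c -> adj v c ->
  (left_of (f c) (f u) /\ left_of (f c) (f v)) \/ (left_of (f u) (f c) /\ left_of (f v) (f c)) ->
  yl (f v) <= yl (f c) -> yr (f v) < yl (f u).
Proof.
  intros Hu Hv Hc Huv Huc Hvc Auc Avc Hside Hlow.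
  destruct (rep_touching u c) as [_ [_ Hcu]]; auto.
  destruct (rep_same_side_separated u v c) as [Hsep|Hsep]; auto; lra.
Qed.

Lemma rep_same_side_not_both_low u v c : P u -> P v -> P c -> u <> v -> u <> c -> v <> c ->
  adj u c -> adj v c ->
  (left_of (f c) (f u) /\ left_of (f c) (f v)) \/ (left_of (f u) (f c) /\ left_of (f v) (f c)) ->
  yl (f u) <= yl (f c) -> yl (f v) <= yl (f c) -> False.
Proof.
  intros Hu Hv Hc Huv Huc Hvc Auc Avc Hside Hlu Hlv.
  pose proof (rep_same_side_above u v c Hu Hv Hc Huv Huc Hvc Auc Avc Hside Hlv).
  destruct (rep_touching v c) as [_ [_ Hcv]]; auto. lra.
Qed.

End Representation.

Fixpoint zsum (n : nat) (F : nat -> Z) : Z :=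
  match n with O => 0%Z | S n' => (zsum n' F + F n')%Z end.

Lemma zsum_ext n F G : (forall j, (j < n)%nat -> F j = G j) -> zsum n F = zsum n G.
Proof. induction n; simpl; intros; auto. rewrite IHn, H; auto. Qed.

Lemma zsum_sub n F G : zsum n (fun j => F j - G j)%Z = (zsum n F - zsum n G)%Z.
Proof. induction n; simpl; auto; rewrite IHn; ring. Qed.

Lemma zsum_add n F G : zsum n (fun j => F j + G j)%Z = (zsum n F + zsum n G)%Z.
Proof. induction n; simpl; auto; rewrite IHn; ring. Qed.

Lemma zsum_shift n F : zsum n (fun j => F (S j)) = (zsum n F + F n - F O)%Z.
Proof. induction n; simpl; [ring|]. rewrite IHn. ring. Qed.

Lemma zsum_even n F : (forall j, (j < n)%nat -> Z.even (F j) = true) -> Z.even (zsum n F) = true.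
Proof.
  induction n; simpl; intros HF; auto.
  rewrite Z.even_add, IHn, HF; auto.
Qed.

Lemma zsum_zero n F : (forall j, (j < n)%nat -> F j = 0%Z) -> zsum n F = 0%Z.
Proof. induction n; simpl; intros HF; auto. rewrite IHn, HF; auto. Qed.

Lemma zsum_two n F a : (S a < n)%nat ->
  (forall j, (j < n)%nat -> j <> a -> j <> S a -> F j = 0%Z) -> zsum n F = (F a + F (S a))%Z.
Proof.
  induction n; intros Ha HF; [lia|]. simpl.
  destruct (Nat.eq_dec n (S a)) as [->|Hn].
  - simpl. rewrite zsum_zero; [ring|]. intros; apply HF; lia.
  - rewrite IHn, (HF n); [ring|lia|lia|lia|lia|intros; apply HF; lia].
Qed.

Lemma even_sub_iff a b : Z.even (a - b) = true <-> Z.even a = Z.even b.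
Proof. rewrite Z.even_sub. apply eqb_true_iff. Qed.

Definition in_column (r : rect) (x : R) : Z :=
  if Rle_dec (xl r) x then if Rlt_dec x (xr r) then 1%Z else 0%Z else 0%Z.

Definition below_bottom (y : R) (r : rect) : Z := if Rlt_dec y (yl r) then 1%Z else 0%Z.

Definition under (r : rect) (x y : R) : Z := (in_column r x * below_bottom y r)%Z.

Definition in_Ioc (a b t : R) : Z :=
  if Rlt_dec a t then if Rle_dec t b then 1%Z else 0%Z else 0%Z.

Lemma in_column_change r x1 x2 : xl r < xr r -> x1 <= x2 ->
  Z.even (in_column r x2 - in_column r x1 - in_Ioc x1 x2 (xl r) - in_Ioc x1 x2 (xr r)) = true.
Proof.
  intros Hr Hx. unfold in_column, in_Ioc.
  destruct (Rle_dec (xl r) x2), (Rlt_dec x2 (xr r)), (Rle_dec (xl r) x1), (Rlt_dec x1 (xr r)),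
    (Rlt_dec x1 (xl r)), (Rle_dec (xl r) x2), (Rlt_dec x1 (xr r)), (Rle_dec (xr r) x2);
    reflexivity || lra.
Qed.

Definition center (r : rect) : R * R := ((xl r + xr r) / 2, (yl r + yr r) / 2).

Lemma center_interior r : proper_rect r -> in_interior r (center r).
Proof. intros [? ?]; unfold in_interior, center; simpl; lra. Qed.

Definition walk {V : Type} (P : V -> Prop) (adj : V -> V -> Prop) (z : nat -> V) (n : nat) :=
  (forall j, (j <= n)%nat -> P (z j)) /\
  (forall j, (j < n)%nat -> z j <> z (S j) /\ adj (z j) (z (S j))).

Section Crossing.
Context {V : Type} {P : V -> Prop} {adj : V -> V -> Prop} {f : V -> rect}.
Hypothesis rep : cbu_rep P adj f.
Variables (z : nat -> V) (k : nat).
Hypothesis z_walk : walk P adj z k.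
Hypothesis z_closed : z k = z O.

Let z_valid j : (j <= k)%nat -> P (z j) := proj1 z_walk j.
Let z_step j : (j < k)%nat -> z j <> z (S j) /\ adj (z j) (z (S j)) := proj2 z_walk j.
Let f_proper v : P v -> proper_rect (f v) := rep_proper _ _ _ rep v.

Definition step_left (j : nat) : V :=
  if Req_EM_T (xr (f (z j))) (xl (f (z (S j)))) then z j else z (S j).

Definition step_right (j : nat) : V :=
  if Req_EM_T (xr (f (z j))) (xl (f (z (S j)))) then z (S j) else z j.

Lemma step_left_right j : (j < k)%nat ->
  ((step_left j = z j /\ step_right j = z (S j)) \/
   (step_left j = z (S j) /\ step_right j = z j)) /\
  left_of (f (step_left j)) (f (step_right j)) /\
  yl (f (step_left j)) < yr (f (step_right j)) /\ yl (f (step_right j)) < yr (f (step_left j)).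
Proof.
  intros Hj. destruct (z_step j Hj) as [Hne Ha].
  destruct (rep_touching rep (z j) (z (S j)) (z_valid j ltac:(lia)) (z_valid (S j) Hj) Hne Ha)
    as [[Hs|Hs] Hy];
  unfold step_left, step_right, left_of in *; destruct (Req_EM_T _ _);
    (split; [tauto|]); repeat split; lra.
Qed.

Lemma step_left_index j : (j < k)%nat -> exists i, (i < k)%nat /\ step_left j = z i.
Proof.
  intros Hj. unfold step_left. destruct (Req_EM_T _ _); [exists j; auto|].
  destruct (Nat.eq_dec (S j) k) as [Hk|Hk].
  - exists O. split; [lia|]. rewrite Hk; auto.
  - exists (S j). split; [lia|auto].
Qed.

Lemma step_left_valid j : (j < k)%nat -> P (step_left j).
Proof. intros; unfold step_left; destruct (Req_EM_T _ _); apply z_valid; lia. Qed.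

Lemma step_right_valid j : (j < k)%nat -> P (step_right j).
Proof. intros; unfold step_right; destruct (Req_EM_T _ _); apply z_valid; lia. Qed.

(* The parity of [crossing] plays the role of the winding number of the closed curve traced by
   the walk: it is constant off the walk, because the contributions of the two ends of a contact
   change together along their common side. *)
Definition crossing (x y : R) : Z := zsum k (fun j => under (f (step_left j)) x y).

Definition crossing_at (p : R * R) : Z := crossing (fst p) (snd p).

Definition off_walk (p : R * R) : Prop := forall j, (j < k)%nat -> ~ in_rect (f (z j)) p.

Lemma off_walk_succ p j : off_walk p -> (j < k)%nat -> ~ in_rect (f (z (S j))) p.
Proof.
  intros Hp Hj. destruct (Nat.eq_dec (S j) k) as [->|]; [rewrite z_closed|]; apply Hp; lia.
Qed.

Lemma off_walk_step_ends p j : off_walk p -> (j < k)%nat ->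
  ~ in_rect (f (step_left j)) p /\ ~ in_rect (f (step_right j)) p.
Proof.
  intros Hp Hj. pose proof (off_walk_succ p j Hp Hj). pose proof (Hp j Hj).
  destruct (step_left_right j Hj) as [[[-> ->]|[-> ->]] _]; auto.
Qed.

Definition left_side_crossed (x1 x2 y : R) (v : V) : Z :=
  (below_bottom y (f v) * in_Ioc x1 x2 (xl (f v)))%Z.

Lemma under_step_change j x1 x2 y : (j < k)%nat -> x1 <= x2 ->
  (forall x, x1 <= x <= x2 -> off_walk (x, y)) ->
  Z.even (under (f (step_left j)) x2 y - under (f (step_left j)) x1 y
          - (left_side_crossed x1 x2 y (z j) + left_side_crossed x1 x2 y (z (S j)))) = true.
Proof.
  intros Hj Hx Hfree. set (Phi := left_side_crossed x1 x2 y).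
  destruct (step_left_right j Hj) as [Hends [Hlr Hy]].
  assert (Hsum : (Phi (step_left j) + Phi (step_right j) = Phi (z j) + Phi (z (S j)))%Z)
    by (destruct Hends as [[-> ->]|[-> ->]]; ring).
  destruct (f_proper _ (step_left_valid j Hj)) as [HLx HLy].
  destruct (f_proper _ (step_right_valid j Hj)) as [HRx HRy].
  set (L := f (step_left j)) in *; set (R' := f (step_right j)) in *.
  (* The point (xr L, y) of the common side is in neither rectangle, so both lie above it
     or neither does. *)
  assert (Hside : (below_bottom y L * in_Ioc x1 x2 (xr L) =
                   below_bottom y R' * in_Ioc x1 x2 (xl R'))%Z).
  { unfold left_of in Hlr. rewrite Hlr. unfold in_Ioc, below_bottom.
    destruct (Rlt_dec x1 (xl R')); [|ring]. destruct (Rle_dec (xl R') x2); [|ring].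
    destruct (off_walk_step_ends (xl R', y) j (Hfree (xl R') ltac:(lra)) Hj) as [HnL HnR].
    fold L R' in HnL, HnR. unfold in_rect in HnL, HnR; simpl in HnL, HnR.
    destruct (Rlt_dec y (yl L)), (Rlt_dec y (yl R')); try ring; exfalso.
    - apply HnR. lra.
    - apply HnL. lra. }
  pose proof (in_column_change L x1 x2 HLx Hx) as Hcol.
  replace (under L x2 y - under L x1 y - (Phi (z j) + Phi (z (S j))))%Z
    with (below_bottom y L *
            (in_column L x2 - in_column L x1 - in_Ioc x1 x2 (xl L) - in_Ioc x1 x2 (xr L)))%Z.
  - rewrite Z.even_mul, Hcol, orb_true_r. reflexivity.
  - rewrite <- Hsum. unfold under, Phi, left_side_crossed. fold L R'. rewrite <- Hside. ring.
Qed.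

Lemma crossing_horizontal x1 x2 y : x1 <= x2 ->
  (forall x, x1 <= x <= x2 -> off_walk (x, y)) -> Z.even (crossing x1 y) = Z.even (crossing x2 y).
Proof.
  intros Hx Hfree.
  set (Phi j := left_side_crossed x1 x2 y (z j)).
  assert (Hclosed : zsum k (fun j => Phi (S j)) = zsum k Phi)
    by (rewrite zsum_shift; unfold Phi at 2 3; rewrite z_closed; ring).
  assert (Hsteps := zsum_even k _ (fun j Hj => under_step_change j x1 x2 y Hj Hx Hfree)).
  simpl in Hsteps. rewrite zsum_sub, zsum_add, zsum_sub in Hsteps.
  change (fun j => left_side_crossed x1 x2 y (z (S j))) with (fun j => Phi (S j)) in Hsteps.
  change (fun j => left_side_crossed x1 x2 y (z j)) with Phi in Hsteps.
  rewrite Hclosed in Hsteps.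
  symmetry. apply even_sub_iff. unfold crossing.
  replace (_ - _)%Z with (zsum k (fun j => under (f (step_left j)) x2 y)
     - zsum k (fun j => under (f (step_left j)) x1 y) - (zsum k Phi + zsum k Phi)
     + 2 * zsum k Phi)%Z by ring.
  rewrite Z.even_add, Hsteps, Z.even_mul. reflexivity.
Qed.

Lemma crossing_vertical x y1 y2 : y1 <= y2 ->
  (forall y, y1 <= y <= y2 -> off_walk (x, y)) -> crossing x y1 = crossing x y2.
Proof.
  intros Hy Hfree. apply zsum_ext. intros j Hj.
  destruct (f_proper _ (step_left_valid j Hj)) as [HLx HLy].
  unfold under, in_column, below_bottom.
  destruct (Rle_dec (xl (f (step_left j))) x); [|ring].
  destruct (Rlt_dec x (xr (f (step_left j)))); [|ring].
  destruct (Rlt_dec y1 (yl (f (step_left j)))), (Rlt_dec y2 (yl (f (step_left j))));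
    try ring; [|lra].
  exfalso.
  apply (proj1 (off_walk_step_ends _ j (Hfree (yl (f (step_left j))) ltac:(lra)) Hj)).
  unfold in_rect; simpl; lra.
Qed.

Lemma crossing_L sx sy my ex : (forall p, on_L sx sy my ex p -> off_walk p) ->
  Z.even (crossing sx sy) = Z.even (crossing ex my).
Proof.
  intros Hfree.
  assert (Hv : crossing sx sy = crossing sx my).
  { destruct (Rle_dec sy my).
    - apply crossing_vertical; auto. intros y Hy. apply Hfree. left; simpl; split; [|left]; auto.
    - symmetry. apply crossing_vertical; [lra|]. intros y Hy.
      apply Hfree. left; simpl; split; [|right]; auto. }
  rewrite Hv. destruct (Rle_dec sx ex).
  - apply crossing_horizontal; auto. intros x Hx. apply Hfree. right; simpl; split; [|left]; auto.
  - symmetry. apply crossing_horizontal; [lra|]. intros x Hx.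
    apply Hfree. right; simpl; split; [|right]; auto.
Qed.

Definition not_on_walk (w : V) : Prop := forall j, (j < k)%nat -> z j <> w.

Lemma interior_off_walk w p : P w -> not_on_walk w -> in_interior (f w) p -> off_walk p.
Proof.
  intros Hw Hn Hp j Hj. apply (rep_interior_excludes rep w (z j)); auto.
  - apply z_valid; lia.
  - intro E. apply (Hn j Hj). auto.
Qed.

Lemma crossing_interior w p q : P w -> not_on_walk w ->
  in_interior (f w) p -> in_interior (f w) q -> Z.even (crossing_at p) = Z.even (crossing_at q).
Proof.
  intros Hw Hn Hp Hq. apply crossing_L. intros r Hr.
  apply (interior_off_walk w); auto.
  unfold in_interior, on_L, between in *. destruct Hr as [[-> Hr]|[-> Hr]]; lra.
Qed.

Lemma crossing_adjacent_left u v : P u -> P v -> not_on_walk u -> not_on_walk v -> u <> v ->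
  left_of (f u) (f v) -> yl (f u) < yr (f v) -> yl (f v) < yr (f u) ->
  Z.even (crossing_at (center (f u))) = Z.even (crossing_at (center (f v))).
Proof.
  intros Hu Hv Nu Nv Huv Hlr Ho1 Ho2. unfold left_of in Hlr.
  destruct (f_proper u Hu) as [Hux Huy]. destruct (f_proper v Hv) as [Hvx Hvy].
  destruct (overlap_point (yl (f u)) (yr (f u)) (yl (f v)) (yr (f v))) as (ys & Hysu & Hysv);
    auto.
  transitivity (Z.even (crossing_at (fst (center (f v)), ys))).
  - apply crossing_L. unfold center; simpl. intros p [[Hp1 Hp2]|[Hp1 Hp2]].
    + apply (interior_off_walk u); auto. unfold in_interior, between in *; rewrite Hp1; lra.
    + destruct (Rlt_dec (fst p) (xr (f u))).
      { apply (interior_off_walk u); auto. unfold in_interior, between in *; rewrite Hp1; lra. }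
      destruct (Rlt_dec (xl (f v)) (fst p)).
      { apply (interior_off_walk v); auto. unfold in_interior, between in *; rewrite Hp1; lra. }
      intros j Hj Hin.
      apply (rep_no_triple_point rep u v (z j) p); auto.
      * apply z_valid; lia.
      * intro E; apply (Nv j Hj); auto.
      * intro E; apply (Nu j Hj); auto.
      * unfold in_rect, between in *; rewrite Hp1; lra.
      * unfold in_rect, between in *; rewrite Hp1; lra.
  - apply (crossing_interior v); auto.
    + unfold center, in_interior; simpl; lra.
    + apply center_interior; split; auto.
Qed.

Lemma crossing_adjacent u v : P u -> P v -> not_on_walk u -> not_on_walk v -> u <> v ->
  adj u v -> Z.even (crossing_at (center (f u))) = Z.even (crossing_at (center (f v))).
Proof.
  intros Hu Hv Nu Nv Huv Ha.
  destruct (rep_touching rep u v Hu Hv Huv Ha) as [[Hlr|Hlr] [Ho1 Ho2]].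
  - apply crossing_adjacent_left; auto.
  - symmetry. apply crossing_adjacent_left; auto.
Qed.

Lemma crossing_path (pi : nat -> V) n : walk P adj pi n ->
  (forall t, (t <= n)%nat -> not_on_walk (pi t)) ->
  Z.even (crossing_at (center (f (pi O)))) = Z.even (crossing_at (center (f (pi n)))).
Proof.
  induction n as [|n IH]; intros [Hval Hstep] Hoff; auto.
  rewrite IH; [| split; intros; [apply Hval | apply Hstep]; lia | intros; apply Hoff; lia].
  destruct (Hstep n ltac:(lia)).
  apply crossing_adjacent; auto.
Qed.

Lemma walk_meets_only_on_sides c j p : P c -> (j < k)%nat -> z j <> c ->
  xl (f c) < fst p < xr (f c) -> in_rect (f c) p -> ~ in_rect (f (z j)) p.
Proof.
  intros Hc Hj Hne Hx HpC HpZ.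
  assert (Hzj : P (z j)) by (apply z_valid; lia).
  assert (Ha : adj (z j) c) by (apply (rep_common_point_adj rep _ _ p); auto).
  pose proof (rep_touching rep (z j) c Hzj Hc Hne Ha) as Ht.
  destruct (touching_meets_on_side (f (z j)) (f c) p Ht HpZ HpC); lra.
Qed.

Variable V_eq_dec : forall u v : V, {u = v} + {u <> v}.

Definition left_count (c : V) : Z :=
  zsum k (fun j => if V_eq_dec (step_left j) c then 1%Z else 0%Z).

Lemma crossing_column c : P c ->
  let x0 := fst (center (f c)) in
  exists e, 0 < e /\ forall d, 0 < d <= e ->
    (crossing x0 (yl (f c) - d) - crossing x0 (yr (f c) + d))%Z = left_count c.
Proof.
  intros Hc x0. destruct (f_proper c Hc) as [Hcx Hcy].
  assert (Hx0 : xl (f c) < x0 < xr (f c)) by (unfold x0, center; simpl; lra).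
  destruct (box_margin_finite k (fun j => f (z j)) (fun j => z j <> c)
              x0 x0 (yl (f c)) (yr (f c))) as (e & He & Hmargin); [lra|lra| |].
  { intros j Hj Hne. split; [apply f_proper, z_valid; lia|].
    intros p [Hpx Hpy]. apply (walk_meets_only_on_sides c); auto; [lra|].
    unfold in_rect; lra. }
  exists e; split; auto. intros d Hd.
  unfold crossing, left_count. rewrite <- zsum_sub. apply zsum_ext. intros j Hj.
  destruct (V_eq_dec (step_left j) c) as [->|Hne].
  - unfold under, in_column, below_bottom.
    destruct (Rle_dec (xl (f c)) x0); [|lra]. destruct (Rlt_dec x0 (xr (f c))); [|lra].
    destruct (Rlt_dec (yl (f c) - d) (yl (f c))); [|lra].
    destruct (Rlt_dec (yr (f c) + d) (yl (f c))); [lra|]. ring.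
  - destruct (step_left_index j Hj) as (i & Hi & Ei). rewrite Ei in *.
    destruct (f_proper (z i) (z_valid i ltac:(lia))) as [Hzx Hzy].
    unfold under, in_column, below_bottom.
    destruct (Rle_dec (xl (f (z i))) x0); [|ring]. destruct (Rlt_dec x0 (xr (f (z i)))); [|ring].
    destruct (Rlt_dec (yl (f c) - d) (yl (f (z i)))), (Rlt_dec (yr (f c) + d) (yl (f (z i))));
      try ring; [|lra].
    exfalso. apply (Hmargin i Hi Hne (x0, yl (f (z i)))).
    + unfold in_box; simpl; lra.
    + unfold in_rect; simpl; lra.
Qed.

Lemma crossing_beside w c bx ys yt : P w -> not_on_walk w -> P c ->
  (xr (f w) = bx /\ bx = xl (f c)) \/ (xl (f w) = bx /\ bx = xr (f c)) ->
  yl (f w) < ys < yr (f w) ->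
  (forall j, (j < k)%nat -> z j <> c ->
     forall p, on_L bx ys yt (fst (center (f c))) p -> ~ in_rect (f (z j)) p) ->
  exists e, 0 < e /\ forall y, yt - e <= y <= yt + e -> y < yl (f c) \/ yr (f c) < y ->
    Z.even (crossing_at (center (f w))) = Z.even (crossing (fst (center (f c))) y).
Proof.
  intros Hw Nw Hc Hside Hys Havoid.
  destruct (f_proper w Hw) as [Hwx Hwy].
  destruct (L_margin_finite k (fun j => f (z j)) (fun j => z j <> c) bx ys yt (fst (center (f c))))
    as (e & He & Hmargin).
  { intros j Hj Hne. split; [apply f_proper, z_valid; lia|]. auto. }
  exists e; split; auto. intros y Hy Hout.
  assert (Hsx : exists sx, bx - e <= sx <= bx + e /\ xl (f w) < sx < xr (f w) /\
                           (sx < xl (f c) \/ xr (f c) < sx)).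
  { pose proof (Rmin_l e ((xr (f w) - xl (f w)) / 2)).
    pose proof (Rmin_r e ((xr (f w) - xl (f w)) / 2)).
    assert (0 < Rmin e ((xr (f w) - xl (f w)) / 2)) by (apply Rmin_glb_lt; lra).
    set (t := Rmin e ((xr (f w) - xl (f w)) / 2)) in *.
    destruct Hside as [[Hs1 Hs2]|[Hs1 Hs2]]; [exists (bx - t) | exists (bx + t)]; lra. }
  destruct Hsx as (sx & Hsx & Hsw & Hsc).
  (* Follow the L-path, pushed off [c] into [w] horizontally and beyond [yt] vertically. *)
  transitivity (Z.even (crossing_at (sx, ys))).
  - apply (crossing_interior w); auto.
    + apply center_interior; split; auto.
    + unfold in_interior; simpl; lra.
  - apply crossing_L. intros p Hp j Hj.
    destruct (V_eq_dec (z j) c) as [->|Hne].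
    + unfold in_rect, on_L. destruct Hp as [[Hp _]|[Hp _]]; simpl in Hp; lra.
    + apply (Hmargin sx y); auto; lra.
Qed.

End Crossing.

Definition Wvert_eq_dec (u v : Wvert) : {u = v} + {u <> v}.
Proof. decide equality; try apply Nat.eq_dec; apply Bool.bool_dec. Defined.

Lemma Wadj_sym g u v : Wadj g u v -> Wadj g v u.
Proof. unfold Wadj; tauto. Qed.

Lemma cyc_neq i j : i <> j -> Cyc i <> Cyc j.
Proof. intros H E. injection E. auto. Qed.

Section Walks.
Variable g : nat.
Hypothesis hg : (3 <= g)%nat.
Local Notation m := (g / 2)%nat.
Local Opaque Nat.div.

Lemma half_pos : (1 <= m)%nat.
Proof. apply Nat.div_le_lower_bound; lia. Qed.

(* [ray h i t] is the t-th vertex of the subdivided ray from [Hub h] (t = 0) to [Cyc i]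
   (t = m + 1). *)
Definition ray (h : bool) (i t : nat) : Wvert :=
  match t with O => Hub h | S s => if (s <? m)%nat then Sub h i s else Cyc i end.

Lemma ray_valid h i t : (i < g)%nat -> Wvalid g (ray h i t).
Proof. intros Hi. destruct t as [|s]; simpl; auto. destruct (Nat.ltb_spec s m); simpl; auto. Qed.

Lemma ray_step h i t : (t <= m)%nat ->
  ray h i t <> ray h i (S t) /\ Wadj g (ray h i t) (ray h i (S t)).
Proof.
  intros Ht. pose proof half_pos. destruct t as [|s]; simpl.
  - destruct (Nat.ltb_spec 0 m); [|lia]. split; [discriminate|]. left; simpl; auto.
  - destruct (Nat.ltb_spec s m), (Nat.ltb_spec (S s) m); try lia.
    + split; [intro E; injection E; lia|]. left; simpl; repeat split; lia.
    + split; [discriminate|]. left; simpl; split; auto; lia.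
Qed.

Lemma ray_shape h i t :
  ray h i t = Hub h \/ (exists s, ray h i t = Sub h i s) \/ ray h i t = Cyc i.
Proof. destruct t as [|s]; simpl; auto. destruct (s <? m)%nat; eauto. Qed.

Lemma ray_last h i : ray h i m = Sub h i (m - 1).
Proof.
  pose proof half_pos. unfold ray. destruct m as [|s]; [lia|].
  destruct (Nat.ltb_spec s (S s)); [f_equal; lia|lia].
Qed.

Lemma ray_top h i : ray h i (S m) = Cyc i.
Proof. simpl. destruct (Nat.ltb_spec m m); [lia|auto]. Qed.

Lemma ray_not_cyc h i t j : (t <= m)%nat -> ray h i t <> Cyc j.
Proof.
  intros Ht. destruct t as [|s]; simpl; [discriminate|].
  destruct (Nat.ltb_spec s m); [discriminate|lia].
Qed.

(* The closed walk Hub h, ray to Cyc i, edge to Cyc d, ray back to Hub h. *)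
Definition cycle_walk (h : bool) (i d j : nat) : Wvert :=
  if (j <=? S m)%nat then ray h i j else ray h d (2 * m + 3 - j).

Lemma cycle_walk_closed h i d : cycle_walk h i d (2 * m + 3) = cycle_walk h i d O.
Proof.
  unfold cycle_walk. destruct (Nat.leb_spec (2 * m + 3) (S m)); [lia|].
  replace (2 * m + 3 - (2 * m + 3))%nat with O by lia. reflexivity.
Qed.

Lemma cycle_walk_walk h i d : (i < g)%nat -> (d < g)%nat -> d <> i -> Wadj g (Cyc i) (Cyc d) ->
  walk (Wvalid g) (Wadj g) (cycle_walk h i d) (2 * m + 3).
Proof.
  intros Hi Hd Hdi Hid. split.
  - intros j _. unfold cycle_walk. destruct (j <=? S m)%nat; apply ray_valid; auto.
  - intros j Hj. unfold cycle_walk.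
    destruct (Nat.leb_spec j (S m)), (Nat.leb_spec (S j) (S m)).
    + apply ray_step. lia.
    + replace j with (S m) by lia. replace (2 * m + 3 - S (S m))%nat with (S m) by lia.
      rewrite !ray_top. split; auto. intro E; injection E; auto.
    + lia.
    + replace (2 * m + 3 - j)%nat with (S (2 * m + 3 - S j)) by lia.
      destruct (ray_step h d (2 * m + 3 - S j)) as [Hne Ha]; [lia|].
      split; auto. now apply Wadj_sym.
Qed.

Lemma cycle_walk_shape h i d j :
  cycle_walk h i d j = Hub h \/ (exists s, cycle_walk h i d j = Sub h i s) \/
  (exists s, cycle_walk h i d j = Sub h d s) \/
  cycle_walk h i d j = Cyc i \/ cycle_walk h i d j = Cyc d.
Proof.
  unfold cycle_walk. destruct (j <=? S m)%nat;
    [destruct (ray_shape h i j) as [|[|]] | destruct (ray_shape h d (2 * m + 3 - j)) as [|[|]]];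
    tauto.
Qed.

Lemma cycle_walk_at_cyc h i d j : d <> i -> (j <= 2 * m + 3)%nat ->
  cycle_walk h i d j = Cyc i -> j = S m.
Proof.
  intros Hdi Hj. unfold cycle_walk. destruct (Nat.leb_spec j (S m)).
  - destruct (Nat.eq_dec j (S m)) as [|Hj']; auto. intro E. exfalso. revert E.
    apply ray_not_cyc. lia.
  - intro E. exfalso. revert E.
    destruct (Nat.eq_dec (2 * m + 3 - j) (S m)) as [E|E].
    + rewrite E, ray_top. intro F; injection F; auto.
    + apply ray_not_cyc. lia.
Qed.

Lemma cycle_walk_at_last h i d : cycle_walk h i d m = Sub h i (m - 1).
Proof. unfold cycle_walk. destruct (Nat.leb_spec m (S m)); [apply ray_last|lia]. Qed.

Lemma cycle_walk_at_top h i d : cycle_walk h i d (S m) = Cyc i.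
Proof. unfold cycle_walk. destruct (Nat.leb_spec (S m) (S m)); [apply ray_top|lia]. Qed.

Lemma cycle_walk_after_top h i d : cycle_walk h i d (S (S m)) = Cyc d.
Proof.
  unfold cycle_walk. destruct (Nat.leb_spec (S (S m)) (S m)); [lia|].
  replace (2 * m + 3 - S (S m))%nat with (S m) by lia. apply ray_top.
Qed.

Lemma cycle_walk_adj_cyc h i d j : d <> i -> cycle_walk h i d j <> Cyc i ->
  Wadj g (cycle_walk h i d j) (Cyc i) ->
  cycle_walk h i d j = Sub h i (m - 1) \/ cycle_walk h i d j = Cyc d.
Proof.
  intros Hdi Hne Ha.
  destruct (cycle_walk_shape h i d j) as [E|[[s E]|[[s E]|[E|E]]]]; rewrite E in *; auto;
    unfold Wadj in Ha; simpl in Ha.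
  - destruct Ha as [[]|[]].
  - destruct Ha as [[_ ->]|[]]. auto.
  - destruct Ha as [[? _]|[]]. congruence.
  - contradiction.
Qed.

(* From the last vertex of the ray to [Cyc i], back to [Hub h], then along the ray to [Cyc e]. *)
Definition ray_path (h : bool) (i e t : nat) : Wvert :=
  if (t <=? m)%nat then ray h i (m - t) else ray h e (t - m).

Lemma ray_path_walk h i e : (i < g)%nat -> (e < g)%nat ->
  walk (Wvalid g) (Wadj g) (ray_path h i e) (2 * m + 1).
Proof.
  intros Hi He. split.
  - intros t _. unfold ray_path. destruct (t <=? m)%nat; apply ray_valid; auto.
  - intros t Ht. unfold ray_path.
    destruct (Nat.leb_spec t m), (Nat.leb_spec (S t) m).
    + replace (m - t)%nat with (S (m - S t)) by lia.
      destruct (ray_step h i (m - S t)) as [Hne Ha]; [lia|].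
      split; auto. now apply Wadj_sym.
    + replace t with m by lia. rewrite Nat.sub_diag.
      replace (S m - m)%nat with 1%nat by lia. apply (ray_step h e 0). lia.
    + lia.
    + replace (S t - m)%nat with (S (t - m)) by lia. apply ray_step. lia.
Qed.

Lemma ray_path_start h i e : ray_path h i e O = Sub h i (m - 1).
Proof. unfold ray_path. simpl. rewrite Nat.sub_0_r. apply ray_last. Qed.

Lemma ray_path_end h i e : ray_path h i e (2 * m + 1) = Cyc e.
Proof.
  unfold ray_path. destruct (Nat.leb_spec (2 * m + 1) m); [lia|].
  replace (2 * m + 1 - m)%nat with (S m) by lia. apply ray_top.
Qed.

Lemma ray_path_off_cycle_walk h i d e t j : e <> i -> e <> d ->
  cycle_walk (negb h) i d j <> ray_path h i e t.
Proof.
  intros Hei Hed.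
  assert (Hshape : ray_path h i e t = Hub h \/ (exists s a, ray_path h i e t = Sub h a s) \/
                   ray_path h i e t = Cyc e).
  { unfold ray_path. destruct (Nat.leb_spec t m).
    - destruct (ray_shape h i (m - t)) as [|[[s E]|E]]; eauto.
      exfalso. revert E. apply ray_not_cyc. lia.
    - destruct (ray_shape h e (t - m)) as [|[[s E]|E]]; eauto. }
  destruct (cycle_walk_shape (negb h) i d j) as [E|[[s E]|[[s E]|[E|E]]]];
    destruct Hshape as [F|[(s' & a & F)|F]]; rewrite E, F;
    try (destruct h; discriminate); intro G; injection G; intros; subst; auto.
Qed.

Lemma cycle_neighbours i : (i < g)%nat ->
  exists a b, (a < g)%nat /\ (b < g)%nat /\ a <> i /\ b <> i /\ a <> b /\
    Wadj g (Cyc a) (Cyc i) /\ Wadj g (Cyc b) (Cyc i).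
Proof.
  intros Hi.
  exists (if (i + 1 =? g)%nat then O else (i + 1)%nat),
    (if (i =? 0)%nat then (g - 1)%nat else (i - 1)%nat).
  destruct (Nat.eqb_spec (i + 1) g), (Nat.eqb_spec i 0); subst;
    repeat split; try lia; unfold Wadj; simpl.
  all: first [ right; rewrite Nat.mod_small by lia; lia
             | right; rewrite Nat.Div0.mod_same; lia
             | left; replace (g - 1 + 1)%nat with g by lia; rewrite Nat.Div0.mod_same; lia
             | left; rewrite Nat.mod_small by lia; lia ].
Qed.

End Walks.

Section No_representation.
Variable g : nat.
Hypothesis hg : (3 <= g)%nat.
Variable f : Wvert -> rect.
Hypothesis rep : cbu_rep (Wvalid g) (Wadj g) f.
Local Notation m := (g / 2)%nat.
Local Notation K := (2 * (g / 2) + 3)%nat.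
Local Notation ray_end h i := (Sub h i (g / 2 - 1)).
Local Opaque Nat.div.

Let f_proper v : Wvalid g v -> proper_rect (f v) := rep_proper _ _ _ rep v.

Lemma ray_end_valid h i : (i < g)%nat -> Wvalid g (ray_end h i).
Proof. intros Hi. pose proof (half_pos g hg). simpl. lia. Qed.

Lemma ray_end_adj h i : Wadj g (ray_end h i) (Cyc i).
Proof. left. simpl. auto. Qed.

Lemma cycle_walk_closed_walk h i d : (i < g)%nat -> (d < g)%nat -> d <> i ->
  Wadj g (Cyc i) (Cyc d) ->
  walk (Wvalid g) (Wadj g) (cycle_walk g h i d) K /\ cycle_walk g h i d K = cycle_walk g h i d O.
Proof. intros. split; [apply cycle_walk_walk|apply cycle_walk_closed]; auto. Qed.

Lemma left_count_cycle_walk h i d : (i < g)%nat -> (d < g)%nat -> d <> i ->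
  Wadj g (Cyc i) (Cyc d) ->
  (left_of (f (Cyc i)) (f (ray_end h i)) /\ left_of (f (Cyc d)) (f (Cyc i))) \/
  (left_of (f (ray_end h i)) (f (Cyc i)) /\ left_of (f (Cyc i)) (f (Cyc d))) ->
  left_count (f := f) (cycle_walk g h i d) K Wvert_eq_dec (Cyc i) = 1%Z.
Proof.
  intros Hi Hd Hdi Hid Hsides. pose proof (half_pos g hg).
  destruct (f_proper _ (ray_end_valid h i Hi)) as [HSx _].
  destruct (f_proper (Cyc i) Hi) as [HCx _]. destruct (f_proper (Cyc d) Hd) as [HDx _].
  unfold left_count. rewrite (zsum_two _ _ m); [|lia|].
  - unfold step_left.
    rewrite (cycle_walk_at_last g hg), (cycle_walk_at_top g hg), (cycle_walk_after_top g hg).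
    unfold left_of in Hsides.
    destruct (Req_EM_T (xr (f (ray_end h i))) (xl (f (Cyc i))));
    destruct (Req_EM_T (xr (f (Cyc i))) (xl (f (Cyc d))));
    destruct (Wvert_eq_dec (ray_end h i) (Cyc i)); try discriminate;
    destruct (Wvert_eq_dec (Cyc i) (Cyc i)); try congruence;
    destruct (Wvert_eq_dec (Cyc d) (Cyc i)) as [E|]; try (injection E; lia);
    reflexivity || lra.
  - intros j Hj Hjm HjSm. destruct (Wvert_eq_dec _ _) as [E|]; auto. exfalso.
    assert (Hat : cycle_walk g h i d j = Cyc i \/ cycle_walk g h i d (S j) = Cyc i)
      by (unfold step_left in E; destruct (Req_EM_T _ _); auto).
    destruct Hat as [Hat|Hat]; apply (cycle_walk_at_cyc g hg) in Hat; auto; lia.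
Qed.

(* [v] reaches the region just beyond the side [yt] (top or bottom) of [Cyc i] without meeting
   the walk [cycle_walk h i d]; the witness is an L-path along the boundary of [Cyc i]. *)
Definition escapes (h : bool) (i d : nat) (v : Wvert) (yt : R) : Prop :=
  exists bx ys,
    ((xr (f v) = bx /\ bx = xl (f (Cyc i))) \/ (xl (f v) = bx /\ bx = xr (f (Cyc i)))) /\
    yl (f v) < ys < yr (f v) /\ yl (f (Cyc i)) <= ys <= yr (f (Cyc i)) /\
    forall p, on_L bx ys yt (fst (center (f (Cyc i)))) p ->
      ~ in_rect (f (ray_end h i)) p /\ ~ in_rect (f (Cyc d)) p.

Lemma escapes_intro h i d v yt bx : (i < g)%nat -> Wvalid g v -> v <> Cyc i ->
  Wadj g v (Cyc i) ->
  (xr (f v) = bx /\ bx = xl (f (Cyc i))) \/ (xl (f v) = bx /\ bx = xr (f (Cyc i))) ->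
  (forall ys, yl (f v) < ys < yr (f v) -> yl (f (Cyc i)) < ys < yr (f (Cyc i)) ->
     forall p, on_L bx ys yt (fst (center (f (Cyc i)))) p ->
       ~ in_rect (f (ray_end h i)) p /\ ~ in_rect (f (Cyc d)) p) ->
  escapes h i d v yt.
Proof.
  intros Hi Hv Hne Ha Hside Havoid.
  destruct (rep_touching rep v (Cyc i) Hv Hi Hne Ha) as [_ [Ho1 Ho2]].
  destruct (f_proper v Hv), (f_proper (Cyc i) Hi).
  destruct (overlap_point (yl (f v)) (yr (f v)) (yl (f (Cyc i))) (yr (f (Cyc i))))
    as (ys & Hysv & Hysc); auto.
  exists bx, ys. split; [auto|]. split; [auto|]. split; [lra|]. apply Havoid; auto.
Qed.

Lemma escape_crossing h i d v yt : (i < g)%nat -> (d < g)%nat -> d <> i ->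
  Wadj g (Cyc i) (Cyc d) -> Wvalid g v -> not_on_walk (cycle_walk g h i d) K v ->
  yt = yl (f (Cyc i)) \/ yt = yr (f (Cyc i)) -> escapes h i d v yt ->
  exists e, 0 < e /\ forall y, yt - e <= y <= yt + e -> y < yl (f (Cyc i)) \/ yr (f (Cyc i)) < y ->
    Z.even (crossing_at (f := f) (cycle_walk g h i d) K (center (f v))) =
    Z.even (crossing (f := f) (cycle_walk g h i d) K (fst (center (f (Cyc i)))) y).
Proof.
  intros Hi Hd Hdi Hid Hv Nv Hyt (bx & ys & Hside & Hysv & Hysc & Havoid).
  destruct (cycle_walk_closed_walk h i d Hi Hd Hdi Hid) as [Hwalk Hclosed].
  destruct (f_proper (Cyc i) Hi) as [HCx HCy].
  apply (crossing_beside rep _ _ Hwalk Hclosed Wvert_eq_dec v (Cyc i) bx ys yt); auto.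
  intros j Hj Hne p Hp Hin.
  assert (HpC : in_rect (f (Cyc i)) p).
  { apply (on_L_in_rect _ bx ys yt (fst (center (f (Cyc i))))); auto; unfold center; simpl; lra. }
  assert (Hzj : Wvalid g (cycle_walk g h i d j)) by (apply (proj1 Hwalk); lia).
  destruct (cycle_walk_adj_cyc g h i d j Hdi Hne) as [E|E].
  - exact (rep_common_point_adj rep _ (Cyc i) p Hzj Hi Hne Hin HpC).
  - rewrite E in Hin. exact (proj1 (Havoid p Hp) Hin).
  - rewrite E in Hin. exact (proj2 (Havoid p Hp) Hin).
Qed.

Lemma no_separating_configuration h i d e : (i < g)%nat -> (d < g)%nat -> (e < g)%nat ->
  d <> i -> e <> i -> e <> d -> Wadj g (Cyc i) (Cyc d) ->
  (left_of (f (Cyc i)) (f (ray_end h i)) /\ left_of (f (Cyc d)) (f (Cyc i))) \/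
  (left_of (f (ray_end h i)) (f (Cyc i)) /\ left_of (f (Cyc i)) (f (Cyc d))) ->
  escapes h i d (ray_end (negb h) i) (yr (f (Cyc i))) ->
  escapes h i d (Cyc e) (yl (f (Cyc i))) -> False.
Proof.
  intros Hi Hd He Hdi Hei Hed Hid Hsides Htop Hbot.
  destruct (cycle_walk_closed_walk h i d Hi Hd Hdi Hid) as [Hwalk Hclosed].
  assert (Hoff : forall t, not_on_walk (cycle_walk g h i d) K (ray_path g (negb h) i e t)).
  { intros t j _. rewrite <- (negb_involutive h) at 1. apply ray_path_off_cycle_walk; auto. }
  pose proof (Hoff O) as Hoff0. rewrite (ray_path_start g hg) in Hoff0.
  pose proof (Hoff (2 * m + 1)%nat) as Hoff1. rewrite (ray_path_end g hg) in Hoff1.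
  destruct (escape_crossing h i d _ _ Hi Hd Hdi Hid (ray_end_valid (negb h) i Hi) Hoff0
              (or_intror eq_refl) Htop) as (e1 & He1 & Habove).
  destruct (escape_crossing h i d (Cyc e) _ Hi Hd Hdi Hid He Hoff1 (or_introl eq_refl) Hbot)
    as (e2 & He2 & Hbelow).
  destruct (crossing_column rep _ _ Hwalk Hclosed Wvert_eq_dec (Cyc i) Hi) as (e3 & He3 & Hcol).
  rewrite (left_count_cycle_walk h i d) in Hcol; auto.
  set (t := Rmin e1 (Rmin e2 e3)).
  assert (0 < t /\ t <= e1 /\ t <= e2 /\ t <= e3) as (Ht & Ht1 & Ht2 & Ht3).
  { unfold t. pose proof (Rmin_l e1 (Rmin e2 e3)); pose proof (Rmin_r e1 (Rmin e2 e3)).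
    pose proof (Rmin_l e2 e3); pose proof (Rmin_r e2 e3).
    repeat split; try lra. repeat apply Rmin_glb_lt; auto. }
  destruct (f_proper (Cyc i) Hi) as [_ HCy].
  assert (Hpath := crossing_path rep _ _ Hwalk Hclosed (ray_path g (negb h) i e) (2 * m + 1)
                     (ray_path_walk g hg (negb h) i e Hi He) (fun t _ => Hoff t)).
  rewrite (ray_path_start g hg), (ray_path_end g hg) in Hpath.
  rewrite (Habove (yr (f (Cyc i)) + t)), (Hbelow (yl (f (Cyc i)) - t)) in Hpath
    by first [split; lra | left; lra | right; lra].
  symmetry in Hpath. rewrite <- even_sub_iff, (Hcol t) in Hpath by lra. discriminate.
Qed.

Section Configuration.
Variables i p q : nat.
Hypotheses (Hi : (i < g)%nat) (Hp : (p < g)%nat) (Hq : (q < g)%nat).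
Hypotheses (Hpi : p <> i) (Hqi : q <> i) (Hpq : p <> q).
Hypotheses (Ap : Wadj g (Cyc p) (Cyc i)) (Aq : Wadj g (Cyc q) (Cyc i)).
Hypotheses (Lp : left_of (f (Cyc p)) (f (Cyc i))) (Rq : left_of (f (Cyc i)) (f (Cyc q))).
Hypotheses (Mp : yl (f (Cyc p)) <= yl (f (Cyc i))) (Mq : yl (f (Cyc q)) <= yl (f (Cyc i))).

Let C := f (Cyc i).
Let S h := f (ray_end h i).

Lemma ray_end_side h :
  (left_of (S h) C /\ yr (f (Cyc p)) < yl (S h)) \/ (left_of C (S h) /\ yr (f (Cyc q)) < yl (S h)).
Proof.
  pose proof (ray_end_valid h i Hi) as Hs.
  destruct (rep_touching rep _ (Cyc i) Hs Hi ltac:(discriminate) (ray_end_adj h i))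
    as [[Hside|Hside] _].
  - left. split; auto.
    apply (rep_same_side_above rep _ _ (Cyc i)); auto using cyc_neq, ray_end_adj; try discriminate.
  - right. split; auto.
    apply (rep_same_side_above rep _ _ (Cyc i)); auto using cyc_neq, ray_end_adj; try discriminate.
Qed.

Ltac rect_facts :=
  pose proof (f_proper (Cyc i) Hi); pose proof (f_proper (Cyc p) Hp);
  pose proof (f_proper (Cyc q) Hq);
  pose proof (f_proper _ (ray_end_valid true i Hi));
  pose proof (f_proper _ (ray_end_valid false i Hi));
  unfold proper_rect, left_of, S, C in *.

Ltac avoid_by_lra :=
  let pt := fresh "pt" in let Hpt := fresh "Hpt" in
  intros ? ? ? pt Hpt; unfold on_L, between, in_rect, center in *; simpl in *;
  split; intros ?; destruct Hpt as [[? [?|?]]|[? [?|?]]]; lra.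

Lemma mixed_sides_contra h :
  left_of C (S h) -> yr (f (Cyc q)) < yl (S h) ->
  left_of (S (negb h)) C -> yr (f (Cyc p)) < yl (S (negb h)) -> False.
Proof.
  intros H1 H2 H3 H4.
  apply (no_separating_configuration h i p q); auto using Wadj_sym.
  - apply (escapes_intro _ _ _ _ _ (xl C)); auto using ray_end_valid, ray_end_adj; try discriminate.
    rect_facts. avoid_by_lra.
  - apply (escapes_intro _ _ _ _ _ (xr C)); auto using cyc_neq.
    rect_facts. avoid_by_lra.
Qed.

Lemma both_left_contra h :
  left_of (S h) C -> yr (f (Cyc p)) < yl (S h) ->
  left_of (S (negb h)) C -> yr (S h) < yl (S (negb h)) -> False.
Proof.
  intros H1 H2 H3 H4.
  apply (no_separating_configuration h i q p); auto using Wadj_sym.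
  - apply (escapes_intro _ _ _ _ _ (xl C)); auto using ray_end_valid, ray_end_adj; try discriminate.
    rect_facts. avoid_by_lra.
  - apply (escapes_intro _ _ _ _ _ (xl C)); auto using cyc_neq.
    rect_facts. avoid_by_lra.
Qed.

Lemma both_right_contra h :
  left_of C (S h) -> yr (f (Cyc q)) < yl (S h) ->
  left_of C (S (negb h)) -> yr (S h) < yl (S (negb h)) -> False.
Proof.
  intros H1 H2 H3 H4.
  apply (no_separating_configuration h i p q); auto using Wadj_sym.
  - apply (escapes_intro _ _ _ _ _ (xr C)); auto using ray_end_valid, ray_end_adj; try discriminate.
    rect_facts. avoid_by_lra.
  - apply (escapes_intro _ _ _ _ _ (xr C)); auto using cyc_neq.
    rect_facts. avoid_by_lra.
Qed.

Lemma configuration_contra : False.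
Proof.
  destruct (ray_end_side true) as [[Lt Ht]|[Rt Ht]], (ray_end_side false) as [[Lf Hf]|[Rf Hf]].
  - destruct (rep_same_side_separated rep (ray_end true i) (ray_end false i) (Cyc i))
      as [Hsep|Hsep]; auto using ray_end_valid, ray_end_adj; try discriminate.
    + exact (both_left_contra true Lt Ht Lf Hsep).
    + exact (both_left_contra false Lf Hf Lt Hsep).
  - exact (mixed_sides_contra false Rf Hf Lt Ht).
  - exact (mixed_sides_contra true Rt Ht Lf Hf).
  - destruct (rep_same_side_separated rep (ray_end true i) (ray_end false i) (Cyc i))
      as [Hsep|Hsep]; auto using ray_end_valid, ray_end_adj; try discriminate.
    + exact (both_right_contra true Rt Ht Rf Hsep).
    + exact (both_right_contra false Rf Hf Rt Hsep).
Qed.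

End Configuration.

Lemma no_representation : False.
Proof.
  destruct (exists_argmax (fun i => yl (f (Cyc i))) g) as (i & Hi & Hmax); [lia|].
  destruct (cycle_neighbours g hg i Hi) as (a & b & Ha & Hb & Hai & Hbi & Hab & Aa & Ab).
  destruct (rep_touching rep (Cyc a) (Cyc i) Ha Hi (cyc_neq _ _ Hai) Aa) as [[Sa|Sa] _],
    (rep_touching rep (Cyc b) (Cyc i) Hb Hi (cyc_neq _ _ Hbi) Ab) as [[Sb|Sb] _].
  - apply (rep_same_side_not_both_low rep (Cyc a) (Cyc b) (Cyc i)); auto using cyc_neq.
  - exact (configuration_contra i a b Hi Ha Hb Hai Hbi Hab Aa Ab Sa Sb (Hmax a Ha) (Hmax b Hb)).
  - exact (configuration_contra i b a Hi Hb Ha Hbi Hai (not_eq_sym Hab) Ab Aa Sb Sa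
             (Hmax b Hb) (Hmax a Ha)).
  - apply (rep_same_side_not_both_low rep (Cyc a) (Cyc b) (Cyc i)); auto using cyc_neq.
Qed.

End No_representation.

Theorem mainTheorem5 (g : nat) (hg : (3 <= g)%nat) :
  ~ in_2CBU (Wvalid g) (Wadj g).
Proof.
  intros (f & Hproper & Hinteriors & Hadj & Hvertical).
  exact (no_representation g hg f (Build_cbu_rep _ _ _ _ Hproper Hinteriors Hadj Hvertical)).
Qed.
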